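(* Let $T$ be the 2-monad on $\mathrm{Cat}$ whose strict algebras are strict monoidal categories (and strict algebra morphisms strict monoidal functors). A strict monoidal category is a pie $T$-algebra if and only if its underlying monoid of objects is a free monoid; that is, if and only if it is a (many-sorted) PRO.
   Context: For a 2-monad $T$ with rank on a complete and cocomplete 2-category $\mathcal C$, $T\text{-Alg}_s$ denotes strict $T$-algebras and strict morphisms, and $T\text{-Alg}$ strict $T$-algebras and pseudomorphisms (algebra morphisms preserving the structure up to coherent invertible 2-cells; here, strong monoidal functors). The inclusion $T\text{-Alg}_s\to T\text{-Alg}$ has a left 2-adjoint $Q$, giving a 2-comonad $Q$ on $T\text{-Alg}_s$; a $T$-algebra is pie if it admits the structure of a strict $Q$-coalgebra. *)

From Stdlib Require Import List.

Set Implicit Arguments.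
Set Universe Polymorphism.

(* A (small) category presented by a single type of morphisms with dom/cod;
   [comp g f] is g ∘ f, meaningful when [cod f = dom g]. *)
Record SMC := {
  Ob : Type;
  Mor : Type;
  dom : Mor -> Ob;
  cod : Mor -> Ob;
  idm : Ob -> Mor;
  comp : Mor -> Mor -> Mor;
  dom_idm : forall a, dom (idm a) = a;
  cod_idm : forall a, cod (idm a) = a;
  dom_comp : forall f g, cod f = dom g -> dom (comp g f) = dom f;
  cod_comp : forall f g, cod f = dom g -> cod (comp g f) = cod g;
  comp_idl : forall f, comp (idm (cod f)) f = f;
  comp_idr : forall f, comp f (idm (dom f)) = f;
  comp_assoc : forall f g h, cod f = dom g -> cod g = dom h ->
     comp h (comp g f) = comp (comp h g) f;
  tens0 : Ob -> Ob -> Ob;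
  tens1 : Mor -> Mor -> Mor;
  unitOb : Ob;
  dom_tens : forall f g, dom (tens1 f g) = tens0 (dom f) (dom g);
  cod_tens : forall f g, cod (tens1 f g) = tens0 (cod f) (cod g);
  tens_idm : forall a b, tens1 (idm a) (idm b) = idm (tens0 a b);
  tens_comp : forall f g f' g', cod f = dom g -> cod f' = dom g' ->
     tens1 (comp g f) (comp g' f') = comp (tens1 g g') (tens1 f f');
  assoc0 : forall a b c, tens0 (tens0 a b) c = tens0 a (tens0 b c);
  unitl0 : forall a, tens0 unitOb a = a;
  unitr0 : forall a, tens0 a unitOb = a;
  assoc1 : forall f g h, tens1 (tens1 f g) h = tens1 f (tens1 g h);
  unitl1 : forall f, tens1 (idm unitOb) f = f;
  unitr1 : forall f, tens1 f (idm unitOb) = f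
}.

Arguments dom {s}. Arguments cod {s}. Arguments idm {s}. Arguments comp {s}.
Arguments tens0 {s}. Arguments tens1 {s}.

Definition isoM {C : SMC} (f : Mor C) : Prop :=
  exists g : Mor C, dom g = cod f /\ cod g = dom f /\
    comp g f = idm (dom f) /\ comp f g = idm (cod f).

(* Strong monoidal functor (= pseudomorphism of T-algebras):
   phi0 : I -> F I, phi2 a b : F a (x) F b -> F (a (x) b), invertible, natural, coherent. *)
Record Pseudo (A B : SMC) := {
  F0 : Ob A -> Ob B;
  F1 : Mor A -> Mor B;
  F_dom : forall f, dom (F1 f) = F0 (dom f);
  F_cod : forall f, cod (F1 f) = F0 (cod f);
  F_idm : forall a, F1 (idm a) = idm (F0 a);
  F_comp : forall f g, cod f = dom g -> F1 (comp g f) = comp (F1 g) (F1 f);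
  phi0 : Mor B;
  phi2 : Ob A -> Ob A -> Mor B;
  phi0_dom : dom phi0 = unitOb B;
  phi0_cod : cod phi0 = F0 (unitOb A);
  phi0_iso : isoM phi0;
  phi2_dom : forall a b, dom (phi2 a b) = tens0 (F0 a) (F0 b);
  phi2_cod : forall a b, cod (phi2 a b) = F0 (tens0 a b);
  phi2_iso : forall a b, isoM (phi2 a b);
  phi2_nat : forall f g,
    comp (F1 (tens1 f g)) (phi2 (dom f) (dom g)) =
    comp (phi2 (cod f) (cod g)) (tens1 (F1 f) (F1 g));
  phi_assoc : forall a b c,
    comp (phi2 (tens0 a b) c) (tens1 (phi2 a b) (idm (F0 c))) =
    comp (phi2 a (tens0 b c)) (tens1 (idm (F0 a)) (phi2 b c));
  phi_unitl : forall a, comp (phi2 (unitOb A) a) (tens1 phi0 (idm (F0 a))) = idm (F0 a);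
  phi_unitr : forall a, comp (phi2 a (unitOb A)) (tens1 (idm (F0 a)) phi0) = idm (F0 a)
}.

Arguments F0 {A B}. Arguments F1 {A B}. Arguments phi0 {A B}. Arguments phi2 {A B}.

Definition strict {A B : SMC} (p : Pseudo A B) : Prop :=
  phi0 p = idm (unitOb B) /\
  forall a b, phi2 p a b = idm (tens0 (F0 p a) (F0 p b)).

(* The underlying data of a pseudomorphism (without proofs), used to express
   equalities of (composites of) pseudomorphisms. *)
Record PData (A B : SMC) := {
  d0 : Ob A -> Ob B;
  d1 : Mor A -> Mor B;
  dphi0 : Mor B;
  dphi2 : Ob A -> Ob A -> Mor B
}.
Arguments d0 {A B}. Arguments d1 {A B}. Arguments dphi0 {A B}. Arguments dphi2 {A B}.

Definition data {A B} (p : Pseudo A B) : PData A B :=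
  {| d0 := F0 p; d1 := F1 p; dphi0 := phi0 p; dphi2 := phi2 p |}.

Definition cdata {A B C} (q : Pseudo B C) (p : Pseudo A B) : PData A C :=
  {| d0 := fun a => F0 q (F0 p a);
     d1 := fun f => F1 q (F1 p f);
     dphi0 := comp (F1 q (phi0 p)) (phi0 q);
     dphi2 := fun a b => comp (F1 q (phi2 p a b)) (phi2 q (F0 p a) (F0 p b)) |}.

Definition iddata (A : SMC) : PData A A :=
  {| d0 := fun a => a; d1 := fun f => f; dphi0 := idm (unitOb A);
     dphi2 := fun a b => idm (tens0 a b) |}.

Definition deq {A B} (d d' : PData A B) : Prop :=
  (forall a, d0 d a = d0 d' a) /\ (forall f, d1 d f = d1 d' f) /\
  dphi0 d = dphi0 d' /\ (forall a b, dphi2 d a b = dphi2 d' a b).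

(* The left adjoint Q of the inclusion T-Alg_s -> T-Alg (pseudomorphism
   classifier): every pseudomorphism g : A ~> B factors uniquely as a strict
   morphism QA -> B after the unit  eta_A : A ~> QA. *)
Record PseudoClassifier := {
  Qo : SMC -> SMC;
  eta : forall A, Pseudo A (Qo A);
  univ : forall (A B : SMC) (g : Pseudo A B),
    exists h : Pseudo (Qo A) B, strict h /\ deq (cdata h (eta A)) (data g) /\
      forall h' : Pseudo (Qo A) B, strict h' -> deq (cdata h' (eta A)) (data g) ->
        deq (data h) (data h')
}.

(* A is pie: it admits a strict coalgebra structure s : A -> QA for the comonad Q
   on T-Alg_s, whose counit eps_A, comultiplication delta_A and action on s are
   the strict morphisms determined by the universal property:
     eps ∘ eta_A = 1_A,  Qs ∘ eta_A = eta_QA ∘ s,  delta ∘ eta_A = eta_QA ∘ eta_A;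
   coalgebra axioms:  eps ∘ s = 1_A  and  Qs ∘ s = delta ∘ s. *)
Definition IsPie (Q : PseudoClassifier) (A : SMC) : Prop :=
  exists s : Pseudo A (Qo Q A), strict s /\
  exists (eps : Pseudo (Qo Q A) A) (Qs delta : Pseudo (Qo Q A) (Qo Q (Qo Q A))),
    strict eps /\ strict Qs /\ strict delta /\
    deq (cdata eps (eta Q A)) (iddata A) /\
    deq (cdata Qs (eta Q A)) (cdata (eta Q (Qo Q A)) s) /\
    deq (cdata delta (eta Q A)) (cdata (eta Q (Qo Q A)) (eta Q A)) /\
    deq (cdata eps s) (iddata A) /\
    deq (cdata Qs s) (cdata delta s).

Definition word_ob (A : SMC) (X : Type) (i : X -> Ob A) (w : list X) : Ob A :=
  fold_right (fun x o => tens0 (i x) o) (unitOb A) w.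

Definition IsFreeMonoidOb (A : SMC) : Prop :=
  exists (X : Type) (i : X -> Ob A),
    (forall w w', word_ob A i w = word_ob A i w' -> w = w') /\
    (forall a, exists w, word_ob A i w = a).

(* The pseudomorphism classifier of a strict monoidal category A is its
   strictification W A: objects are words in the objects of A, morphisms between
   two words are morphisms of A between their tensor products, and every strong
   monoidal functor out of A extends uniquely to a strict one out of W A.  Under
   Q A = W A the counit of the comonad evaluates words, and the comultiplication
   splits a word into the word of its one-letter words.  A strict coalgebra is thus
   a strict monoidal t : A -> W A with [tensor of t a = a] sending every letter of
   every t a to a one-letter word; the objects a with t a = [a] then freely generate
   the monoid of objects.  Conversely, if the objects are free on X, spelling each
   object as its word in X is such a coalgebra. *)

From Stdlib Require Import List ClassicalEpsilon ProofIrrelevance.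
Import ListNotations.

Hint Rewrite dom_idm cod_idm dom_tens cod_tens F_dom F_cod
  phi0_dom phi0_cod phi2_dom phi2_cod : domcod.

Ltac domcod :=
  repeat progress (autorewrite with domcod;
    try (rewrite dom_comp by domcod); try (rewrite cod_comp by domcod));
  try reflexivity; try congruence;
  try (repeat rewrite ?unitl0, ?unitr0, ?assoc0; reflexivity).

Section Category.
Context {C : SMC}.

Lemma comp_idl_eq (f : Mor C) a : cod f = a -> comp (idm a) f = f.
Proof. intros <-; apply comp_idl. Qed.

Lemma comp_idr_eq (f : Mor C) a : dom f = a -> comp f (idm a) = f.
Proof. intros <-; apply comp_idr. Qed.

Lemma comp_idm_idm (a : Ob C) : comp (idm a) (idm a) = idm a.
Proof. apply comp_idl_eq, cod_idm. Qed.

Lemma tens_comp_idr (f g : Mor C) x : cod f = dom g ->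
  tens1 (comp g f) (idm x) = comp (tens1 g (idm x)) (tens1 f (idm x)).
Proof. intros H. rewrite <- tens_comp by domcod. rewrite comp_idm_idm; auto. Qed.

Lemma tens_comp_idl (f g : Mor C) x : cod f = dom g ->
  tens1 (idm x) (comp g f) = comp (tens1 (idm x) g) (tens1 (idm x) f).
Proof. intros H. rewrite <- tens_comp by domcod. rewrite comp_idm_idm; auto. Qed.

Definition inverse (g f : Mor C) : Prop :=
  dom g = cod f /\ cod g = dom f /\ comp g f = idm (dom f) /\ comp f g = idm (cod f).

Lemma inverse_unique g g' f : inverse g f -> inverse g' f -> g = g'.
Proof.
  intros (H1&H2&H3&H4) (H1'&H2'&H3'&H4').
  rewrite <- (comp_idr_eq g (cod f)) by auto. rewrite <- H4'.
  rewrite comp_assoc by congruence. rewrite H3. apply comp_idl_eq. congruence.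
Qed.

Definition inv (f : Mor C) : Mor C := epsilon (inhabits f) (fun g => inverse g f).

Lemma inverse_inv f : isoM f -> inverse (inv f) f.
Proof. intros H. unfold inv. apply epsilon_spec. exact H. Qed.

Lemma inv_of_inverse f g : inverse g f -> inv f = g.
Proof. intros H. exact (inverse_unique _ _ _ (inverse_inv f (ex_intro _ g H)) H). Qed.

Lemma inverse_idm a : inverse (idm a) (idm a : Mor C).
Proof. unfold inverse. rewrite !dom_idm, !cod_idm, comp_idm_idm. tauto. Qed.

Lemma inv_idm a : inv (idm a : Mor C) = idm a.
Proof. apply inv_of_inverse, inverse_idm. Qed.

Lemma inverse_comp (f f' g g' : Mor C) : inverse f' f -> inverse g' g -> cod f = dom g ->
  inverse (comp f' g') (comp g f).
Proof.
  intros (Hf1&Hf2&Hf3&Hf4) (Hg1&Hg2&Hg3&Hg4) H.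
  unfold inverse. rewrite (dom_comp _ f g), (cod_comp _ f g) by congruence.
  rewrite (dom_comp _ g' f'), (cod_comp _ g' f') by congruence.
  repeat split; auto.
  - rewrite (comp_assoc _ f g (comp f' g')) by (try rewrite dom_comp; congruence).
    rewrite <- (comp_assoc _ g g' f') by congruence. rewrite Hg3, <- H.
    rewrite comp_idr_eq by auto. auto.
  - rewrite <- (comp_assoc _ (comp f' g') f g) by (try rewrite cod_comp; congruence).
    rewrite (comp_assoc _ g' f' f) by congruence. rewrite Hf4, H.
    rewrite comp_idl_eq by congruence. auto.
Qed.

Lemma inverse_tens (f f' g g' : Mor C) :
  inverse f' f -> inverse g' g -> inverse (tens1 f' g') (tens1 f g).
Proof.
  intros (Hf1&Hf2&Hf3&Hf4) (Hg1&Hg2&Hg3&Hg4).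
  unfold inverse. rewrite !dom_tens, !cod_tens.
  repeat split; try congruence; rewrite <- tens_comp by congruence.
  - rewrite Hf3, Hg3. apply tens_idm.
  - rewrite Hf4, Hg4. apply tens_idm.
Qed.

Lemma isoM_idm a : isoM (idm a : Mor C).
Proof. exists (idm a). apply inverse_idm. Qed.

Lemma isoM_comp (f g : Mor C) : isoM f -> isoM g -> cod f = dom g -> isoM (comp g f).
Proof. intros [f' Hf] [g' Hg] H. exists (comp f' g'). now apply inverse_comp. Qed.

Lemma isoM_tens (f g : Mor C) : isoM f -> isoM g -> isoM (tens1 f g).
Proof. intros [f' Hf] [g' Hg]. exists (tens1 f' g'). now apply inverse_tens. Qed.

Definition is_identity (g : Mor C) : Prop := g = idm (dom g).

Lemma is_identity_idm a : is_identity (idm a).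
Proof. unfold is_identity; rewrite dom_idm; auto. Qed.

Lemma is_identity_cod g : is_identity g -> cod g = dom g.
Proof. unfold is_identity; intros H; rewrite H at 1; apply cod_idm. Qed.

Lemma is_identity_comp f g : is_identity f -> is_identity g -> cod f = dom g ->
  is_identity (comp g f).
Proof.
  intros Hf Hg H. unfold is_identity in *. rewrite dom_comp by auto.
  assert (E : g = idm (cod f)) by (rewrite H; exact Hg).
  rewrite E, comp_idl_eq by reflexivity. exact Hf.
Qed.

Lemma is_identity_tens f g : is_identity f -> is_identity g -> is_identity (tens1 f g).
Proof. unfold is_identity; intros Hf Hg. rewrite Hf, Hg, tens_idm, dom_idm; auto. Qed.

Lemma is_identity_inverse g f : inverse g f -> is_identity f -> is_identity g.
Proof.
  intros (H1&H2&H3&H4) Hf.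
  assert (E : comp g f = g).
  { rewrite Hf. apply comp_idr_eq. rewrite H1. apply is_identity_cod, Hf. }
  unfold is_identity. rewrite <- E at 1. rewrite H3, H1, is_identity_cod; auto.
Qed.

End Category.

Lemma F1_inverse {A B} (p : Pseudo A B) g f : inverse g f -> inverse (F1 p g) (F1 p f).
Proof.
  intros (H1&H2&H3&H4). unfold inverse. rewrite !F_dom, !F_cod.
  rewrite <- !F_comp by congruence. rewrite H3, H4, !F_idm. repeat split; congruence.
Qed.

Lemma F1_isoM {A B} (p : Pseudo A B) f : isoM f -> isoM (F1 p f).
Proof. intros [g H]. exists (F1 p g). now apply F1_inverse. Qed.

Section StrictFacts.
Context {A B : SMC} (p : Pseudo A B) (Hp : strict p).

Lemma strict_unit : F0 p (unitOb A) = unitOb B.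
Proof. rewrite <- (phi0_cod p), (proj1 Hp). apply cod_idm. Qed.

Lemma strict_tens0 a b : F0 p (tens0 a b) = tens0 (F0 p a) (F0 p b).
Proof. rewrite <- (phi2_cod p a b), (proj2 Hp). apply cod_idm. Qed.

Lemma strict_tens1 f g : F1 p (tens1 f g) = tens1 (F1 p f) (F1 p g).
Proof.
  pose proof (phi2_nat p f g) as E. rewrite !(proj2 Hp) in E.
  rewrite comp_idr_eq, comp_idl_eq in E; auto.
  - rewrite cod_tens, !F_cod; auto.
  - rewrite F_dom, dom_tens; apply strict_tens0.
Qed.

End StrictFacts.

Section StrictFunctor.
Context {A B : SMC} (G0 : Ob A -> Ob B) (G1 : Mor A -> Mor B)
  (Gdom : forall f, dom (G1 f) = G0 (dom f))
  (Gcod : forall f, cod (G1 f) = G0 (cod f))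
  (Gidm : forall a, G1 (idm a) = idm (G0 a))
  (Gcomp : forall f g, cod f = dom g -> G1 (comp g f) = comp (G1 g) (G1 f))
  (Gunit : G0 (unitOb A) = unitOb B)
  (Gtens0 : forall a b, G0 (tens0 a b) = tens0 (G0 a) (G0 b))
  (Gtens1 : forall f g, G1 (tens1 f g) = tens1 (G1 f) (G1 g)).

Definition strict_functor : Pseudo A B.
Proof.
  refine {| F0 := G0; F1 := G1; F_dom := Gdom; F_cod := Gcod; F_idm := Gidm;
            F_comp := Gcomp; phi0 := idm (unitOb B);
            phi2 := fun a b => idm (tens0 (G0 a) (G0 b)) |}.
  - apply dom_idm.
  - rewrite cod_idm; auto.
  - apply isoM_idm.
  - intros; apply dom_idm.
  - intros; rewrite cod_idm; auto.
  - intros; apply isoM_idm.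
  - intros f g. rewrite Gtens1, comp_idr_eq, comp_idl_eq; auto.
    + rewrite cod_tens, !Gcod; auto.
    + rewrite dom_tens, !Gdom; auto.
  - intros a b c. rewrite !Gtens0, !tens_idm, !comp_idm_idm, assoc0. auto.
  - intros a. rewrite Gunit, tens_idm, unitl0, comp_idm_idm. auto.
  - intros a. rewrite Gunit, tens_idm, unitr0, comp_idm_idm. auto.
Defined.

Lemma strict_functor_strict : strict strict_functor.
Proof. split; reflexivity. Qed.

End StrictFunctor.

Definition id_pseudo (A : SMC) : Pseudo A A :=
  @strict_functor A A (fun a => a) (fun f => f)
    (fun _ => eq_refl) (fun _ => eq_refl) (fun _ => eq_refl) (fun _ _ _ => eq_refl)
    eq_refl (fun _ _ => eq_refl) (fun _ _ => eq_refl).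

Section CompPseudo.
Context {A B C : SMC} (q : Pseudo B C) (p : Pseudo A B).

Definition comp_phi0 : Mor C := comp (F1 q (phi0 p)) (phi0 q).
Definition comp_phi2 a b : Mor C := comp (F1 q (phi2 p a b)) (phi2 q (F0 p a) (F0 p b)).

Lemma comp_phi0_dom : dom comp_phi0 = unitOb C.
Proof. unfold comp_phi0. domcod. Qed.
Lemma comp_phi0_cod : cod comp_phi0 = F0 q (F0 p (unitOb A)).
Proof. unfold comp_phi0. domcod. Qed.
Lemma comp_phi2_dom a b : dom (comp_phi2 a b) = tens0 (F0 q (F0 p a)) (F0 q (F0 p b)).
Proof. unfold comp_phi2. domcod. Qed.
Lemma comp_phi2_cod a b : cod (comp_phi2 a b) = F0 q (F0 p (tens0 a b)).
Proof. unfold comp_phi2. domcod. Qed.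
Hint Rewrite comp_phi0_dom comp_phi0_cod comp_phi2_dom comp_phi2_cod : domcod.

Lemma comp_phi2_nat f g :
  comp (F1 q (F1 p (tens1 f g))) (comp_phi2 (dom f) (dom g)) =
  comp (comp_phi2 (cod f) (cod g)) (tens1 (F1 q (F1 p f)) (F1 q (F1 p g))).
Proof.
  unfold comp_phi2.
  rewrite comp_assoc, <- F_comp, phi2_nat, F_comp, <- comp_assoc by domcod.
  pose proof (phi2_nat q (F1 p f) (F1 p g)) as N. rewrite !F_dom, !F_cod in N.
  rewrite N, comp_assoc by domcod. reflexivity.
Qed.

Lemma comp_phi_assoc a b c :
  comp (comp_phi2 (tens0 a b) c) (tens1 (comp_phi2 a b) (idm (F0 q (F0 p c)))) =
  comp (comp_phi2 a (tens0 b c)) (tens1 (idm (F0 q (F0 p a))) (comp_phi2 b c)).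
Proof.
  unfold comp_phi2.
  rewrite tens_comp_idr, tens_comp_idl by domcod.
  repeat (rewrite <- comp_assoc by domcod).
  pose proof (phi2_nat q (phi2 p a b) (idm (F0 p c))) as N1.
  rewrite phi2_dom, phi2_cod, dom_idm, cod_idm, F_idm in N1.
  rewrite (comp_assoc _ (tens1 (phi2 q (F0 p a) (F0 p b)) (idm (F0 q (F0 p c))))
     (tens1 (F1 q (phi2 p a b)) (idm (F0 q (F0 p c))))) by domcod.
  rewrite <- N1, <- comp_assoc, comp_assoc, <- F_comp by domcod.
  rewrite !phi_assoc.
  pose proof (phi2_nat q (idm (F0 p a)) (phi2 p b c)) as N2.
  rewrite phi2_dom, phi2_cod, dom_idm, cod_idm, F_idm in N2.
  rewrite F_comp by domcod.
  repeat (rewrite <- comp_assoc by domcod).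
  rewrite (comp_assoc _ (tens1 (idm (F0 q (F0 p a))) (phi2 q (F0 p b) (F0 p c)))
     (phi2 q (F0 p a) (tens0 (F0 p b) (F0 p c)))) by domcod.
  rewrite N2.
  repeat (rewrite <- comp_assoc by domcod). reflexivity.
Qed.

Lemma comp_phi_unitl a :
  comp (comp_phi2 (unitOb A) a) (tens1 comp_phi0 (idm (F0 q (F0 p a)))) = idm (F0 q (F0 p a)).
Proof.
  unfold comp_phi2, comp_phi0.
  rewrite tens_comp_idr by domcod. repeat (rewrite <- comp_assoc by domcod).
  pose proof (phi2_nat q (phi0 p) (idm (F0 p a))) as N.
  rewrite phi0_dom, phi0_cod, dom_idm, cod_idm, F_idm in N.
  rewrite (comp_assoc _ (tens1 (phi0 q) (idm (F0 q (F0 p a))))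
     (tens1 (F1 q (phi0 p)) (idm (F0 q (F0 p a))))) by domcod.
  rewrite <- N, <- comp_assoc, phi_unitl, comp_idr_eq, <- F_comp by domcod.
  rewrite phi_unitl, F_idm. reflexivity.
Qed.

Lemma comp_phi_unitr a :
  comp (comp_phi2 a (unitOb A)) (tens1 (idm (F0 q (F0 p a))) comp_phi0) = idm (F0 q (F0 p a)).
Proof.
  unfold comp_phi2, comp_phi0.
  rewrite tens_comp_idl by domcod. repeat (rewrite <- comp_assoc by domcod).
  pose proof (phi2_nat q (idm (F0 p a)) (phi0 p)) as N.
  rewrite phi0_dom, phi0_cod, dom_idm, cod_idm, F_idm in N.
  rewrite (comp_assoc _ (tens1 (idm (F0 q (F0 p a))) (phi0 q))
     (tens1 (idm (F0 q (F0 p a))) (F1 q (phi0 p)))) by domcod.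
  rewrite <- N, <- comp_assoc, phi_unitr, comp_idr_eq, <- F_comp by domcod.
  rewrite phi_unitr, F_idm. reflexivity.
Qed.

Definition comp_pseudo : Pseudo A C.
Proof.
  refine {| F0 := fun a => F0 q (F0 p a); F1 := fun f => F1 q (F1 p f);
            phi0 := comp_phi0; phi2 := comp_phi2;
            phi0_dom := comp_phi0_dom; phi0_cod := comp_phi0_cod;
            phi2_dom := comp_phi2_dom; phi2_cod := comp_phi2_cod;
            phi2_nat := comp_phi2_nat; phi_assoc := comp_phi_assoc;
            phi_unitl := comp_phi_unitl; phi_unitr := comp_phi_unitr |}.
  - intros; domcod.
  - intros; domcod.
  - intros; rewrite !F_idm; auto.
  - intros f g H. rewrite !F_comp; domcod.
  - apply isoM_comp; [apply phi0_iso | apply F1_isoM, phi0_iso | domcod].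
  - intros a b. apply isoM_comp; [apply phi2_iso | apply F1_isoM, phi2_iso | domcod].
Defined.

End CompPseudo.

Lemma comp_pseudo_strict {A B C} (q : Pseudo B C) (p : Pseudo A B) :
  strict q -> strict p -> strict (comp_pseudo q p).
Proof.
  intros Hq Hp. split; simpl; unfold comp_phi0, comp_phi2.
  - rewrite (proj1 Hp), (proj1 Hq), F_idm, strict_unit by auto. apply comp_idm_idm.
  - intros a b. rewrite (proj2 Hp), (proj2 Hq), F_idm, strict_tens0 by auto.
    apply comp_idm_idm.
Qed.

Definition mapd {A B C} (q : Pseudo B C) (d : PData A B) : PData A C :=
  {| d0 := fun a => F0 q (d0 d a); d1 := fun f => F1 q (d1 d f);
     dphi0 := F1 q (dphi0 d); dphi2 := fun a b => F1 q (dphi2 d a b) |}.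

Definition premapd {A B C} (d : PData B C) (p : Pseudo A B) : PData A C :=
  {| d0 := fun a => d0 d (F0 p a); d1 := fun f => d1 d (F1 p f);
     dphi0 := dphi0 d; dphi2 := fun a b => dphi2 d (F0 p a) (F0 p b) |}.

Definition dcomp {A B C} (d : PData B C) (e : PData A B) : PData A C :=
  {| d0 := fun a => d0 d (d0 e a); d1 := fun f => d1 d (d1 e f);
     dphi0 := comp (d1 d (dphi0 e)) (dphi0 d);
     dphi2 := fun a b => comp (d1 d (dphi2 e a b)) (dphi2 d (d0 e a) (d0 e b)) |}.

Lemma mapd_comp_pseudo {A B C D} (q : Pseudo C D) (p : Pseudo B C) (d : PData A B) :
  mapd (comp_pseudo q p) d = mapd q (mapd p d).
Proof. reflexivity. Qed.

Lemma mapd_premapd {A B C D} (q : Pseudo C D) (d : PData B C) (p : Pseudo A B) :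
  mapd q (premapd d p) = premapd (mapd q d) p.
Proof. reflexivity. Qed.

Lemma premapd_premapd {A B C D} (d : PData C D) (h : Pseudo B C) (s : Pseudo A B) :
  premapd (premapd d h) s = premapd d (comp_pseudo h s).
Proof. reflexivity. Qed.

Lemma dcomp_premapd {A B C D} (d : PData C D) (h : Pseudo B C) (e : PData A B) :
  dcomp (premapd d h) e = dcomp d (mapd h e).
Proof. reflexivity. Qed.

Section DataEquality.
Context {A B C : SMC}.

Lemma deq_refl (d : PData A B) : deq d d.
Proof. repeat split. Qed.

Lemma deq_sym (d d' : PData A B) : deq d d' -> deq d' d.
Proof. intros (H1&H2&H3&H4); repeat split; intros; symmetry; auto. Qed.

Lemma deq_trans (d d' d'' : PData A B) : deq d d' -> deq d' d'' -> deq d d''.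
Proof. intros (H1&H2&H3&H4) (H1'&H2'&H3'&H4'); repeat split; intros; congruence. Qed.

Lemma mapd_deq (q : Pseudo B C) (d d' : PData A B) : deq d d' -> deq (mapd q d) (mapd q d').
Proof. intros (H1&H2&H3&H4); repeat split; intros; simpl; congruence. Qed.

Lemma premapd_deq (d d' : PData B C) (p : Pseudo A B) :
  deq d d' -> deq (premapd d p) (premapd d' p).
Proof. intros (H1&H2&H3&H4); repeat split; intros; simpl; congruence. Qed.

Lemma dcomp_deq (d d' : PData B C) (e e' : PData A B) :
  deq d d' -> deq e e' -> deq (dcomp d e) (dcomp d' e').
Proof.
  intros (H1&H2&H3&H4) (H1'&H2'&H3'&H4'); repeat split; intros; simpl;
  rewrite ?H1, ?H2, ?H3, ?H4, ?H1', ?H2', ?H3', ?H4'; auto.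
Qed.

Lemma mapd_injective (G : Pseudo B C) (d d' : PData A B) :
  (forall x y, F0 G x = F0 G y -> x = y) -> (forall f g, F1 G f = F1 G g -> f = g) ->
  deq (mapd G d) (mapd G d') -> deq d d'.
Proof. intros I0 I1 (H1&H2&H3&H4); repeat split; intros; simpl in *; auto. Qed.

Lemma cdata_strict_l (q : Pseudo B C) (p : Pseudo A B) :
  strict q -> deq (cdata q p) (mapd q (data p)).
Proof.
  intros Hq. repeat split; simpl.
  - rewrite (proj1 Hq). apply comp_idr_eq. rewrite F_dom, phi0_dom. apply strict_unit; auto.
  - intros a b. rewrite (proj2 Hq). apply comp_idr_eq.
    rewrite F_dom, phi2_dom. apply strict_tens0; auto.
Qed.

Lemma cdata_strict_r (q : Pseudo B C) (p : Pseudo A B) :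
  strict p -> deq (cdata q p) (premapd (data q) p).
Proof.
  intros Hp. repeat split; simpl.
  - rewrite (proj1 Hp), F_idm. apply comp_idl_eq. rewrite phi0_cod. auto.
  - intros a b. rewrite (proj2 Hp), F_idm. apply comp_idl_eq. rewrite phi2_cod. auto.
Qed.

End DataEquality.

Ltac dtrans X := apply deq_trans with X.

Lemma mapd_cdata {A B C D} (G : Pseudo C D) (q : Pseudo B C) (p : Pseudo A B) :
  deq (mapd G (cdata q p)) (dcomp (mapd G (data q)) (data p)).
Proof. repeat split; simpl; intros; rewrite F_comp; auto; domcod. Qed.

Lemma mapd_cdata_strict_r {A B B' C D} (G : Pseudo C D) (Z : Pseudo B C)
  (Y : Pseudo B' D) (h : Pseudo B B') (s : Pseudo A B) :
  strict s -> deq (mapd G (data Z)) (mapd Y (data h)) ->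
  deq (mapd G (cdata Z s)) (mapd Y (cdata h s)).
Proof.
  intros Hs E.
  dtrans (mapd G (premapd (data Z) s)). { apply mapd_deq, cdata_strict_r, Hs. }
  rewrite mapd_premapd.
  dtrans (premapd (mapd Y (data h)) s). { apply premapd_deq, E. }
  rewrite <- mapd_premapd.
  apply mapd_deq, deq_sym, cdata_strict_r, Hs.
Qed.

Lemma classifier_unique (Q : PseudoClassifier) (A B : SMC) (h1 h2 : Pseudo (Qo Q A) B) :
  strict h1 -> strict h2 -> deq (cdata h1 (eta Q A)) (cdata h2 (eta Q A)) ->
  deq (data h1) (data h2).
Proof.
  intros H1 H2 E.
  destruct (univ Q (comp_pseudo h2 (eta Q A))) as (h & _ & _ & Hu).
  dtrans (data h).
  - apply deq_sym, Hu; auto.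
  - apply Hu; auto. apply deq_refl.
Qed.

Definition retraction {B C} (K : Pseudo C B) (G : Pseudo B C) : Prop :=
  (forall x, F0 K (F0 G x) = x) /\ (forall f, F1 K (F1 G f) = f).

Lemma mapd_cancel {A B C} (K : Pseudo C B) (G : Pseudo B C) (d d' : PData A B) :
  retraction K G -> deq (mapd G d) (mapd G d') -> deq d d'.
Proof.
  intros [R0 R1]. apply mapd_injective.
  - intros x y E. rewrite <- (R0 x), <- (R0 y), E. reflexivity.
  - intros f g E. rewrite <- (R1 f), <- (R1 g), E. reflexivity.
Qed.

Lemma retraction_comp {B C D} (K : Pseudo C B) (G : Pseudo B C)
  (K' : Pseudo D C) (G' : Pseudo C D) :
  retraction K G -> retraction K' G' -> retraction (comp_pseudo K K') (comp_pseudo G' G).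
Proof.
  intros [R0 R1] [R0' R1']. split; intros; simpl; rewrite ?R0', ?R1'; auto.
Qed.

Lemma mapd_retraction {A B C} (K : Pseudo C B) (G : Pseudo B C) (d : PData A B) :
  retraction K G -> deq (mapd K (mapd G d)) d.
Proof. intros [R0 R1]. repeat split; intros; simpl; auto. Qed.

Lemma data_comp_pseudo {A B C} (q : Pseudo B C) (p : Pseudo A B) :
  data (comp_pseudo q p) = cdata q p.
Proof. reflexivity. Qed.

Lemma mapd_id_pseudo {A B} (d : PData A B) : deq (mapd (id_pseudo B) d) d.
Proof. repeat split. Qed.

(** * The strictification [Wcat] *)

Definition tens_word (C : SMC) (w : list (Ob C)) : Ob C :=
  fold_right (fun a o => tens0 a o) (unitOb C) w.

Lemma tens_word_app C (w w' : list (Ob C)) :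
  tens_word C (w ++ w') = tens0 (tens_word C w) (tens_word C w').
Proof.
  induction w as [|a w IH]; simpl.
  - rewrite unitl0; auto.
  - rewrite IH, assoc0; auto.
Qed.

Record WMor (C : SMC) := mkW {
  wdom : list (Ob C); wcod : list (Ob C); wmor : Mor C;
  wmor_dom : dom wmor = tens_word C wdom; wmor_cod : cod wmor = tens_word C wcod }.
Arguments mkW {C}. Arguments wdom {C}. Arguments wcod {C}. Arguments wmor {C}.
Arguments wmor_dom {C}. Arguments wmor_cod {C}.

Lemma WMor_eq C (m m' : WMor C) :
  wdom m = wdom m' -> wcod m = wcod m' -> wmor m = wmor m' -> m = m'.
Proof.
  destruct m as [d c f p q], m' as [d' c' f' p' q']; simpl; intros; subst.
  f_equal; apply proof_irrelevance.
Qed.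

Section W.
Context (C : SMC).

Definition Wid (w : list (Ob C)) : WMor C :=
  mkW w w (idm (tens_word C w)) (dom_idm _ _) (cod_idm _ _).

(* Junk value [f] when [g] and [f] are not composable. *)
Definition Wcomp (g f : WMor C) : WMor C.
Proof.
  destruct (excluded_middle_informative (wcod f = wdom g)) as [H|H].
  - refine (mkW (wdom f) (wcod g) (comp (wmor g) (wmor f)) _ _).
    + rewrite dom_comp. apply wmor_dom. rewrite wmor_cod, wmor_dom, H; auto.
    + rewrite cod_comp. apply wmor_cod. rewrite wmor_cod, wmor_dom, H; auto.
  - exact f.
Defined.

Lemma Wcomp_dom g f : wcod f = wdom g -> wdom (Wcomp g f) = wdom f.
Proof. intros H; unfold Wcomp; destruct excluded_middle_informative; simpl; tauto. Qed.
Lemma Wcomp_cod g f : wcod f = wdom g -> wcod (Wcomp g f) = wcod g.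
Proof. intros H; unfold Wcomp; destruct excluded_middle_informative; simpl; tauto. Qed.
Lemma Wcomp_mor g f : wcod f = wdom g -> wmor (Wcomp g f) = comp (wmor g) (wmor f).
Proof. intros H; unfold Wcomp; destruct excluded_middle_informative; simpl; tauto. Qed.

Definition Wtens (m m' : WMor C) : WMor C.
Proof.
  refine (mkW (wdom m ++ wdom m') (wcod m ++ wcod m') (tens1 (wmor m) (wmor m')) _ _).
  - rewrite dom_tens, !wmor_dom, tens_word_app; auto.
  - rewrite cod_tens, !wmor_cod, tens_word_app; auto.
Defined.

Definition Wcat : SMC.
Proof.
  refine {| Ob := list (Ob C); Mor := WMor C; dom := wdom; cod := wcod; idm := Wid;
            comp := Wcomp; tens0 := @app (Ob C); tens1 := Wtens; unitOb := [] |}.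
  - reflexivity.
  - reflexivity.
  - intros; apply Wcomp_dom; auto.
  - intros; apply Wcomp_cod; auto.
  - intros f. apply WMor_eq; rewrite ?Wcomp_dom, ?Wcomp_cod, ?Wcomp_mor; simpl; auto.
    apply comp_idl_eq. apply wmor_cod.
  - intros f. apply WMor_eq; rewrite ?Wcomp_dom, ?Wcomp_cod, ?Wcomp_mor; simpl; auto.
    apply comp_idr_eq. apply wmor_dom.
  - intros f g h H1 H2. apply WMor_eq;
      rewrite ?Wcomp_dom, ?Wcomp_cod, ?Wcomp_mor; rewrite ?Wcomp_dom, ?Wcomp_cod, ?Wcomp_mor; auto.
    apply comp_assoc. rewrite wmor_cod, wmor_dom, H1; auto. rewrite wmor_cod, wmor_dom, H2; auto.
  - reflexivity.
  - reflexivity.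
  - intros a b. apply WMor_eq; simpl; auto. rewrite tens_idm, tens_word_app; auto.
  - intros f g f' g' H1 H2.
    apply WMor_eq; simpl; rewrite ?Wcomp_dom, ?Wcomp_cod, ?Wcomp_mor; simpl; auto; try congruence.
    apply tens_comp. rewrite wmor_cod, wmor_dom, H1; auto. rewrite wmor_cod, wmor_dom, H2; auto.
  - intros; symmetry; apply app_assoc.
  - reflexivity.
  - intros; apply app_nil_r.
  - intros f g h. apply WMor_eq; simpl; rewrite ?app_assoc; auto. apply assoc1.
  - intros f. apply WMor_eq; simpl; auto. apply unitl1.
  - intros f. apply WMor_eq; simpl; rewrite ?app_nil_r; auto. apply unitr1.
Defined.
End W.

Arguments Wid {C}. Arguments Wcomp {C}. Arguments Wtens {C}.

Ltac wsimp := repeat (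
  simpl Ob in *; simpl Mor in *; simpl dom in *; simpl cod in *;
  simpl idm in *; simpl tens0 in *; simpl tens1 in *; simpl unitOb in *;
  simpl comp in *; simpl wdom in *; simpl wcod in *; simpl wmor in *).

Ltac wside :=
  wsimp; simpl; try (autorewrite with domcod);
  first [ reflexivity | congruence
        | (rewrite ?Wcomp_dom, ?Wcomp_cod by wside; simpl; first [reflexivity | congruence])
        | auto ].
Ltac wcomp := wsimp; rewrite ?Wcomp_dom, ?Wcomp_cod, ?Wcomp_mor by wside.

Ltac idsimp :=
  repeat (progress (rewrite ?unitr0, ?unitl0, ?tens_idm, ?comp_idm_idm, ?assoc0)); auto.

Section Weta.
Context (C : SMC).

Definition Weta1 (f : Mor C) : WMor C.
Proof.
  refine (mkW [dom f] [cod f] f _ _); simpl; symmetry; apply unitr0.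
Defined.

Definition Weta_phi0 : WMor C.
Proof.
  refine (mkW [] [unitOb C] (idm (unitOb C)) _ _); simpl; rewrite ?dom_idm, ?cod_idm, ?unitr0; auto.
Defined.

Definition Weta_phi2 (a b : Ob C) : WMor C.
Proof.
  refine (mkW [a; b] [tens0 a b] (idm (tens0 a b)) _ _); simpl;
    rewrite ?dom_idm, ?cod_idm, ?unitr0; auto.
Defined.

Definition Weta : Pseudo C (Wcat C).
Proof.
  refine (@Build_Pseudo C (Wcat C) (fun a => [a] : Ob (Wcat C)) Weta1 _ _ _ _
            Weta_phi0 Weta_phi2 _ _ _ _ _ _ _ _ _ _).
  - reflexivity.
  - reflexivity.
  - intros a. apply WMor_eq; simpl; rewrite ?dom_idm, ?cod_idm; auto. rewrite unitr0; auto.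
  - intros f g H. apply WMor_eq; wcomp; simpl; auto; [rewrite dom_comp | rewrite cod_comp]; auto.
  - reflexivity.
  - reflexivity.
  - unshelve eexists (mkW [unitOb C] [] (idm (unitOb C)) _ _).
    1,2: simpl; rewrite ?dom_idm, ?cod_idm, ?unitr0; auto.
    wsimp. repeat split; apply WMor_eq; wcomp; simpl; auto;
      rewrite ?unitr0, ?unitl0; apply comp_idm_idm.
  - reflexivity.
  - reflexivity.
  - intros a b. unshelve eexists (mkW [tens0 a b] [a; b] (idm (tens0 a b)) _ _).
    + simpl. rewrite unitr0, dom_idm. auto.
    + simpl. rewrite unitr0, cod_idm. auto.
    + wsimp. repeat split; apply WMor_eq; wcomp; simpl; auto;
        rewrite ?unitr0, ?unitl0; apply comp_idm_idm.
  - intros f g. apply WMor_eq; wcomp; simpl; auto.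
    + rewrite cod_tens; auto.
    + rewrite comp_idr_eq, comp_idl_eq; auto. apply cod_tens. apply dom_tens.
  - intros a b c. apply WMor_eq; wcomp; simpl; auto.
    + rewrite assoc0; auto.
    + idsimp.
  - intros a. apply WMor_eq; wcomp; simpl; auto.
    + rewrite unitl0; auto.
    + idsimp.
  - intros a. apply WMor_eq; wcomp; simpl; auto.
    + rewrite unitr0; auto.
    + idsimp.
Defined.

Definition Weps : Pseudo (Wcat C) C.
Proof.
  refine (@strict_functor (Wcat C) C (tens_word C) wmor _ _ _ _ _ _ _).
  - intros m; apply wmor_dom.
  - intros m; apply wmor_cod.
  - reflexivity.
  - intros f g H. wcomp. reflexivity.
  - reflexivity.
  - intros a b; apply tens_word_app.
  - reflexivity.
Defined.

Lemma Weps_strict : strict Weps.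
Proof. apply strict_functor_strict. Qed.

Lemma Weps_Weta : deq (cdata Weps Weta) (iddata C).
Proof.
  repeat split; simpl.
  - intros a; apply unitr0.
  - rewrite !comp_idm_idm; auto.
  - intros a b. rewrite comp_idl_eq. idsimp. rewrite cod_idm. idsimp.
Qed.
End Weta.

Lemma strict_tens_word {C D} (S : Pseudo C D) (HS : strict S) w :
  F0 S (tens_word C w) = tens_word D (map (F0 S) w).
Proof.
  induction w as [|a w IH]; simpl. apply strict_unit; auto. rewrite strict_tens0, IH; auto.
Qed.

Section Wmap.
Context {C D : SMC} (S : Pseudo C D) (HS : strict S).

Definition Wmap1 (m : WMor C) : WMor D.
Proof.
  refine (mkW (map (F0 S) (wdom m)) (map (F0 S) (wcod m)) (F1 S (wmor m)) _ _).
  - rewrite F_dom, wmor_dom. apply strict_tens_word; auto.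
  - rewrite F_cod, wmor_cod. apply strict_tens_word; auto.
Defined.

Definition Wmap : Pseudo (Wcat C) (Wcat D).
Proof.
  refine (@strict_functor (Wcat C) (Wcat D) (map (F0 S)) Wmap1 _ _ _ _ _ _ _).
  - reflexivity.
  - reflexivity.
  - intros w. apply WMor_eq; wsimp; auto. rewrite F_idm, strict_tens_word; auto.
  - intros f g H. apply WMor_eq; wcomp; simpl; auto. apply F_comp.
    rewrite wmor_cod, wmor_dom. wsimp. rewrite H; auto.
  - reflexivity.
  - intros; apply map_app.
  - intros f g. apply WMor_eq; wsimp; simpl; rewrite ?map_app; auto. apply strict_tens1; auto.
Defined.

Lemma Wmap_strict : strict Wmap.
Proof. apply strict_functor_strict. Qed.

Lemma Wmap_Weta : deq (cdata Wmap (Weta C)) (premapd (data (Weta D)) S).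
Proof.
  repeat split; simpl.
  - intros f. apply WMor_eq; simpl; rewrite ?F_dom, ?F_cod; auto.
  - apply WMor_eq; wcomp; simpl; auto.
    + rewrite strict_unit; auto.
    + rewrite F_idm, strict_unit; auto. idsimp.
  - intros a b. apply WMor_eq; wcomp; simpl; auto.
    + rewrite strict_tens0; auto.
    + rewrite F_idm, strict_tens0; auto. idsimp.
Qed.
End Wmap.

Section Wdelta.
Context (C : SMC).

Lemma tens_word_singletons (w : list (Ob C)) :
  tens_word (Wcat C) (map (fun a => [a]) w) = w.
Proof. induction w as [|a w IH]; simpl; auto. rewrite IH; auto. Qed.

Definition Wdelta1 (m : WMor C) : WMor (Wcat C).
Proof.
  refine (@mkW (Wcat C) (map (fun a => [a]) (wdom m)) (map (fun a => [a]) (wcod m)) m _ _);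
  rewrite tens_word_singletons; reflexivity.
Defined.

Definition Wdelta : Pseudo (Wcat C) (Wcat (Wcat C)).
Proof.
  refine (@strict_functor (Wcat C) (Wcat (Wcat C)) (map (fun a => [a])) Wdelta1 _ _ _ _ _ _ _).
  - reflexivity.
  - reflexivity.
  - intros w. apply WMor_eq; wsimp; auto. rewrite tens_word_singletons; auto.
  - intros f g H. apply WMor_eq; wcomp; simpl; auto.
  - reflexivity.
  - intros; apply map_app.
  - intros f g. apply WMor_eq; wsimp; simpl; rewrite ?map_app; auto.
Defined.

Lemma Wdelta_strict : strict Wdelta.
Proof. apply strict_functor_strict. Qed.

Lemma Wdelta_Weta : deq (cdata Wdelta (Weta C)) (cdata (Weta (Wcat C)) (Weta C)).
Proof.
  repeat split; simpl.
  - intros f. apply WMor_eq; simpl; auto.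
  - apply WMor_eq; wcomp; simpl; auto.
    all: try (apply WMor_eq; wcomp; simpl; auto; idsimp).
  - intros a b. apply WMor_eq; wcomp; simpl; auto.
    all: try (apply WMor_eq; wcomp; simpl; auto; idsimp).
Qed.
End Wdelta.

Lemma wmor_inverse {C} (g f : WMor C) : @inverse (Wcat C) g f -> inverse (wmor g) (wmor f).
Proof.
  intros (H1&H2&H3&H4). wsimp.
  assert (E3 := f_equal wmor H3). assert (E4 := f_equal wmor H4).
  rewrite Wcomp_mor in E3, E4 by auto. simpl in E3, E4.
  unfold inverse. rewrite !wmor_dom, !wmor_cod, H1, H2. repeat split; auto.
Qed.

(** * Extending pseudomorphisms along [Weta] *)

Section Wext.
Context {A B : SMC} (P : Pseudo A B).

Fixpoint ext0 (w : list (Ob A)) : Ob B :=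
  match w with [] => unitOb B | a :: w => tens0 (F0 P a) (ext0 w) end.
Fixpoint phiw (w : list (Ob A)) : Mor B :=
  match w with [] => phi0 P
  | a :: w => comp (phi2 P a (tens_word A w)) (tens1 (idm (F0 P a)) (phiw w)) end.

Lemma phiw_dom_cod w : dom (phiw w) = ext0 w /\ cod (phiw w) = F0 P (tens_word A w).
Proof.
  induction w as [|a w [IH1 IH2]]; simpl. split; [apply phi0_dom | apply phi0_cod].
  assert (E : cod (tens1 (idm (F0 P a)) (phiw w)) = dom (phi2 P a (tens_word A w))).
  { rewrite cod_tens, cod_idm, phi2_dom, IH2; auto. }
  rewrite dom_comp, cod_comp by exact E. rewrite dom_tens, dom_idm, IH1, phi2_cod; auto.
Qed.
Lemma phiw_dom w : dom (phiw w) = ext0 w. Proof. apply phiw_dom_cod. Qed.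
Lemma phiw_cod w : cod (phiw w) = F0 P (tens_word A w). Proof. apply phiw_dom_cod. Qed.

Lemma phiw_isoM w : isoM (phiw w).
Proof.
  induction w as [|a w IH]; simpl. apply phi0_iso.
  apply isoM_comp. apply isoM_tens; auto. apply isoM_idm. apply phi2_iso.
  rewrite cod_tens, cod_idm, phi2_dom, phiw_cod; auto.
Qed.

Definition psiw w := inv (phiw w).
Lemma psiw_inverse w : inverse (psiw w) (phiw w).
Proof. apply inverse_inv, phiw_isoM. Qed.
Lemma psiw_dom w : dom (psiw w) = F0 P (tens_word A w).
Proof. destruct (psiw_inverse w) as (H&_). rewrite H; apply phiw_cod. Qed.
Lemma psiw_cod w : cod (psiw w) = ext0 w.
Proof. destruct (psiw_inverse w) as (_&H&_). rewrite H; apply phiw_dom. Qed.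
Lemma psiw_phiw w : comp (psiw w) (phiw w) = idm (ext0 w).
Proof. destruct (psiw_inverse w) as (_&_&H&_). rewrite H, phiw_dom; auto. Qed.
Lemma phiw_psiw w : comp (phiw w) (psiw w) = idm (F0 P (tens_word A w)).
Proof. destruct (psiw_inverse w) as (_&_&_&H). rewrite H, phiw_cod; auto. Qed.

Lemma ext0_app w w' : ext0 (w ++ w') = tens0 (ext0 w) (ext0 w').
Proof.
  induction w as [|a w IH]; simpl. rewrite unitl0; auto. rewrite IH, assoc0; auto.
Qed.

Hint Rewrite phiw_dom phiw_cod psiw_dom psiw_cod (@wmor_dom A) (@wmor_cod A) : domcod.

Definition ext1 (m : WMor A) : Mor B :=
  comp (psiw (wcod m)) (comp (F1 P (wmor m)) (phiw (wdom m))).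

Lemma ext1_dom_cod m : dom (ext1 m) = ext0 (wdom m) /\ cod (ext1 m) = ext0 (wcod m).
Proof.
  unfold ext1. assert (E1 : cod (phiw (wdom m)) = dom (F1 P (wmor m))) by domcod.
  assert (E2 : cod (comp (F1 P (wmor m)) (phiw (wdom m))) = dom (psiw (wcod m))) by domcod.
  rewrite dom_comp, cod_comp by exact E2. rewrite dom_comp by exact E1.
  domcod. split; reflexivity.
Qed.

Lemma ext1_dom m : dom (ext1 m) = ext0 (wdom m). Proof. apply ext1_dom_cod. Qed.
Lemma ext1_cod m : cod (ext1 m) = ext0 (wcod m). Proof. apply ext1_dom_cod. Qed.
Hint Rewrite ext1_dom ext1_cod : domcod.

Lemma ext1_idm w : ext1 (Wid w) = idm (ext0 w).
Proof.
  unfold ext1; simpl. rewrite F_idm. rewrite comp_idl_eq by domcod. apply psiw_phiw.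
Qed.

Lemma ext1_comp (f g : WMor A) :
  wcod f = wdom g -> ext1 (Wcomp g f) = comp (ext1 g) (ext1 f).
Proof.
  intros H. unfold ext1. rewrite Wcomp_dom, Wcomp_cod, Wcomp_mor by auto.
  rewrite F_comp by (rewrite wmor_cod, wmor_dom, H; auto).
  rewrite <- H.
  rewrite <- (comp_assoc _ (comp (psiw (wcod f)) (comp (F1 P (wmor f)) (phiw (wdom f))))
               (comp (F1 P (wmor g)) (phiw (wcod f))) (psiw (wcod g))) by domcod.
  rewrite <- (comp_assoc _ (comp (psiw (wcod f)) (comp (F1 P (wmor f)) (phiw (wdom f))))
               (phiw (wcod f)) (F1 P (wmor g))) by domcod.
  rewrite (comp_assoc _ (comp (F1 P (wmor f)) (phiw (wdom f))) (psiw (wcod f)) (phiw (wcod f)))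
    by domcod.
  rewrite phiw_psiw. rewrite comp_idl_eq by domcod.
  rewrite <- (comp_assoc _ (phiw (wdom f)) (F1 P (wmor f)) (F1 P (wmor g))) by domcod.
  reflexivity.
Qed.

Lemma phiw_app w w' : phiw (w ++ w') =
  comp (phi2 P (tens_word A w) (tens_word A w')) (tens1 (phiw w) (phiw w')).
Proof.
  induction w as [|a w IH]; simpl.
  - assert (E : tens1 (phi0 P) (phiw w') =
       comp (tens1 (phi0 P) (idm (F0 P (tens_word A w')))) (tens1 (idm (unitOb B)) (phiw w'))).
    { rewrite <- tens_comp by domcod. rewrite comp_idr_eq, comp_idl_eq by domcod. reflexivity. }
    rewrite E, comp_assoc, phi_unitl, unitl1, comp_idl_eq by domcod. reflexivity.
  - rewrite IH, tens_word_app.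
    set (T := tens1 (phiw w) (phiw w')).
    assert (E1 : tens1 (idm (F0 P a)) (comp (phi2 P (tens_word A w) (tens_word A w')) T) =
       comp (tens1 (idm (F0 P a)) (phi2 P (tens_word A w) (tens_word A w')))
            (tens1 (idm (F0 P a)) T)).
    { rewrite <- tens_comp by (unfold T; domcod). rewrite comp_idm_idm; reflexivity. }
    rewrite E1. rewrite comp_assoc by (unfold T; domcod). rewrite <- phi_assoc.
    set (X := tens1 (idm (F0 P a)) (phiw w)).
    assert (E2 : tens1 (comp (phi2 P a (tens_word A w)) X) (phiw w') =
       comp (tens1 (phi2 P a (tens_word A w)) (idm (F0 P (tens_word A w'))))
            (tens1 X (phiw w'))).
    { rewrite <- tens_comp by (unfold X; domcod). rewrite comp_idl_eq by domcod. reflexivity. }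
    rewrite E2. unfold X, T. rewrite assoc1. rewrite comp_assoc by domcod. reflexivity.
Qed.

Lemma psiw_app w w' : psiw (w ++ w') =
  comp (tens1 (psiw w) (psiw w')) (inv (phi2 P (tens_word A w) (tens_word A w'))).
Proof.
  unfold psiw at 1. apply inv_of_inverse. rewrite phiw_app. apply inverse_comp.
  - apply inverse_tens; apply psiw_inverse.
  - apply inverse_inv, phi2_iso.
  - domcod.
Qed.

Lemma ext1_tens (m m' : WMor A) : ext1 (Wtens m m') = tens1 (ext1 m) (ext1 m').
Proof.
  unfold ext1; simpl. rewrite phiw_app, psiw_app.
  pose proof (inverse_inv _ (phi2_iso P (tens_word A (wcod m)) (tens_word A (wcod m'))))
    as (I1&I2&I3&I4).
  rewrite <- (wmor_dom m), <- (wmor_dom m'), <- (wmor_cod m), <- (wmor_cod m') in *.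
  set (TP := tens1 (phiw (wdom m)) (phiw (wdom m'))).
  set (TS := tens1 (psiw (wcod m)) (psiw (wcod m'))).
  set (iota := inv (phi2 P (cod (wmor m)) (cod (wmor m')))) in *.
  rewrite (comp_assoc _ TP (phi2 P (dom (wmor m)) (dom (wmor m'))) (F1 P (tens1 (wmor m) (wmor m'))))
    by (unfold TP; domcod).
  rewrite phi2_nat.
  rewrite <- (comp_assoc _ TP (tens1 (F1 P (wmor m)) (F1 P (wmor m')))) by (unfold TP; domcod).
  set (Y := comp (tens1 (F1 P (wmor m)) (F1 P (wmor m'))) TP).
  rewrite <- (comp_assoc _ (comp (phi2 P (cod (wmor m)) (cod (wmor m'))) Y) iota TS)
    by (unfold Y, TP, TS; rewrite ?I1, ?I2; domcod).
  rewrite (comp_assoc _ Y (phi2 P (cod (wmor m)) (cod (wmor m'))) iota)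
    by (unfold Y, TP, TS; rewrite ?I1, ?I2; domcod).
  rewrite I3. rewrite comp_idl_eq by (unfold Y, TP; domcod).
  unfold Y, TS, TP. rewrite <- !tens_comp by domcod. reflexivity.
Qed.

Definition Wext : Pseudo (Wcat A) B.
Proof.
  refine (@strict_functor (Wcat A) B ext0 ext1 _ _ _ _ _ _ _).
  - apply ext1_dom.
  - apply ext1_cod.
  - apply ext1_idm.
  - apply ext1_comp.
  - reflexivity.
  - apply ext0_app.
  - apply ext1_tens.
Defined.

Lemma Wext_strict : strict Wext.
Proof. apply strict_functor_strict. Qed.

Lemma phiw_single a : phiw [a] = idm (F0 P a).
Proof. simpl. apply phi_unitr. Qed.
Lemma psiw_single a : psiw [a] = idm (F0 P a).
Proof. unfold psiw. rewrite phiw_single. apply inv_idm. Qed.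

Lemma Wext_Weta : deq (cdata Wext (Weta A)) (data P).
Proof.
  repeat split; simpl.
  - intros a. apply unitr0.
  - intros f. unfold ext1; simpl. rewrite ?phiw_single, ?phi_unitr, psiw_single.
    rewrite comp_idr_eq by domcod. rewrite comp_idl_eq by domcod. reflexivity.
  - unfold ext1; simpl. rewrite psiw_single, F_idm.
    rewrite !comp_idl_eq, comp_idr_eq by domcod. reflexivity.
  - intros a b. unfold ext1; simpl. rewrite psiw_single, F_idm, ?phiw_single, ?phi_unitr, unitr0.
    rewrite tens_idm, !unitr0, (comp_idr_eq (phi2 P a b)), !comp_idl_eq, comp_idr_eq by domcod.
    reflexivity.
Qed.

End Wext.
Hint Rewrite @phiw_dom @phiw_cod @psiw_dom @psiw_cod @ext1_dom @ext1_cod @wmor_dom @wmor_cod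
  : domcod.

(* Once [h P = Weta], [h] sends every coherence isomorphism [phiw P w] to an
   identity, so [h] undoes [Wext P]. *)
Section WextRetraction.
Context {A B : SMC} (h : Pseudo B (Wcat A)) (Hh : strict h).

Definition collapses (x : Mor B) := is_identity (wmor (F1 h x)).

Lemma h_wdom x : wdom (F1 h x) = F0 h (dom x).
Proof. exact (F_dom h x). Qed.
Lemma h_wcod x : wcod (F1 h x) = F0 h (cod x).
Proof. exact (F_cod h x). Qed.

Lemma collapses_comp f g :
  collapses f -> collapses g -> cod f = dom g -> collapses (comp g f).
Proof.
  unfold collapses; intros Hf Hg H. rewrite F_comp by auto. wsimp.
  rewrite Wcomp_mor. apply is_identity_comp; auto.
  rewrite wmor_cod, wmor_dom, h_wcod, h_wdom, H; auto.
  rewrite h_wcod, h_wdom, H; auto.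
Qed.
Lemma collapses_tens f g : collapses f -> collapses g -> collapses (tens1 f g).
Proof.
  unfold collapses; intros Hf Hg. rewrite strict_tens1 by auto. apply is_identity_tens; auto.
Qed.
Lemma collapses_inverse f g : inverse g f -> collapses f -> collapses g.
Proof.
  unfold collapses; intros H Hf. apply (is_identity_inverse _ (wmor (F1 h f))); auto.
  apply wmor_inverse. apply F1_inverse; auto.
Qed.
Lemma collapses_idm a : collapses (idm a).
Proof. unfold collapses. rewrite F_idm. apply is_identity_idm. Qed.

Context (P : Pseudo A B) (E : deq (cdata h P) (data (Weta A))).

Lemma mapd_h_P : deq (mapd h (data P)) (data (Weta A)).
Proof. eapply deq_trans. apply deq_sym, cdata_strict_l; auto. exact E. Qed.

Lemma h_ext0 w : F0 h (ext0 P w) = w.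
Proof.
  destruct mapd_h_P as (E0&_).
  induction w as [|a w IH]; simpl. exact (strict_unit h Hh).
  rewrite strict_tens0, IH by auto. simpl in E0. rewrite E0. reflexivity.
Qed.

Lemma collapses_phiw w : collapses (phiw P w).
Proof.
  destruct mapd_h_P as (_&_&E2&E3). simpl in E2, E3.
  induction w as [|a w IH]; simpl.
  - unfold collapses. rewrite E2. apply is_identity_idm.
  - apply collapses_comp. apply collapses_tens; auto. apply collapses_idm.
    unfold collapses. rewrite E3. apply is_identity_idm. domcod.
Qed.

Lemma collapses_psiw w : collapses (psiw P w).
Proof. apply (collapses_inverse (phiw P w)). apply psiw_inverse. apply collapses_phiw. Qed.

Lemma h_ext1 m : F1 h (ext1 P m) = m.
Proof.
  destruct mapd_h_P as (E0 & E1 & _). simpl in E0, E1.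
  assert (Hphi := collapses_phiw (wdom m)). assert (Hpsi := collapses_psiw (wcod m)).
  unfold collapses, is_identity in Hphi, Hpsi.
  assert (Ephi : wcod (F1 h (phiw P (wdom m))) = [dom (wmor m)]).
  { rewrite h_wcod, phiw_cod, E0, wmor_dom. reflexivity. }
  assert (Epsi : wdom (F1 h (psiw P (wcod m))) = [cod (wmor m)]).
  { rewrite h_wdom, psiw_dom, E0, wmor_cod. reflexivity. }
  apply WMor_eq.
  - rewrite h_wdom, ext1_dom, h_ext0; auto.
  - rewrite h_wcod, ext1_cod, h_ext0; auto.
  - unfold ext1. rewrite !F_comp by domcod. wsimp.
    rewrite !Wcomp_mor, E1; simpl; rewrite ?Wcomp_cod, ?E1;
      [| rewrite Ephi; reflexivity | rewrite Epsi; reflexivity | rewrite Ephi, E1; reflexivity].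
    rewrite Hphi, Hpsi, comp_idr_eq, comp_idl_eq; auto.
    + rewrite wmor_dom, Epsi. symmetry. apply unitr0.
    + rewrite (wmor_dom (F1 h _)), h_wdom, phiw_dom, h_ext0. apply wmor_dom.
Qed.

Lemma h_Wext_retraction : retraction h (Wext P).
Proof. split; [exact h_ext0 | exact h_ext1]. Qed.

End WextRetraction.

(** * Comparison of [Qo Q A] with [Wcat A] *)

Lemma Wmap_retraction {B C} (K : Pseudo C B) (HK : strict K) (S : Pseudo B C) (HS : strict S) :
  retraction K S -> retraction (Wmap K HK) (Wmap S HS).
Proof.
  intros [R0 R1].
  assert (Rw : forall w, map (F0 K) (map (F0 S) w) = w).
  { intros w. rewrite map_map, (map_ext _ (fun x => x) R0). apply map_id. }
  split; intros; simpl; auto.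
  apply WMor_eq; simpl; auto.
Qed.

Lemma factor_through_eta (Q : PseudoClassifier) {A B C D : SMC} (G : Pseudo B D)
  (Z : Pseudo (Qo Q A) B) (Y : Pseudo C D) (h : Pseudo (Qo Q A) C) :
  strict G -> strict Z -> strict Y -> strict h ->
  deq (mapd G (mapd Z (data (eta Q A)))) (mapd Y (mapd h (data (eta Q A)))) ->
  deq (mapd G (data Z)) (mapd Y (data h)).
Proof.
  intros HG HZ HY Hh E.
  dtrans (data (comp_pseudo G Z)). { apply deq_sym, cdata_strict_l, HG. }
  dtrans (data (comp_pseudo Y h)). 2: { apply cdata_strict_l, HY. }
  apply (classifier_unique Q); try (apply comp_pseudo_strict; assumption).
  dtrans (mapd (comp_pseudo G Z) (data (eta Q A))).
  { apply cdata_strict_l, comp_pseudo_strict; auto. }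
  dtrans (mapd (comp_pseudo Y h) (data (eta Q A))). { exact E. }
  apply deq_sym, cdata_strict_l, comp_pseudo_strict; auto.
Qed.

Lemma Wext_h_retraction (Q : PseudoClassifier) (A : SMC) (h : Pseudo (Qo Q A) (Wcat A)) :
  strict h -> deq (cdata h (eta Q A)) (data (Weta A)) -> retraction (Wext (eta Q A)) h.
Proof.
  intros Hh Eh.
  assert (E : deq (mapd (Wext (eta Q A)) (data h))
                  (mapd (id_pseudo (Qo Q A)) (data (id_pseudo (Qo Q A))))).
  { apply (factor_through_eta Q);
      [apply Wext_strict | exact Hh | apply strict_functor_strict | apply strict_functor_strict |].
    dtrans (mapd (Wext (eta Q A)) (data (Weta A))). { apply mapd_deq, mapd_h_P; auto. }
    dtrans (cdata (Wext (eta Q A)) (Weta A)). { apply deq_sym, cdata_strict_l, Wext_strict. }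
    apply Wext_Weta. }
  destruct E as (E0 & E1 & _). split; [exact E0 | exact E1].
Qed.

Section ClassifierComparison.
Context (Q : PseudoClassifier) (A : SMC) (h : Pseudo (Qo Q A) (Wcat A)) (Hh : strict h)
  (Eh : deq (cdata h (eta Q A)) (data (Weta A))).

Lemma counit_factor (eps : Pseudo (Qo Q A) A) :
  strict eps -> deq (cdata eps (eta Q A)) (iddata A) ->
  deq (mapd (id_pseudo A) (data eps)) (mapd (Weps A) (data h)).
Proof.
  intros He E1. apply (factor_through_eta Q);
    [apply strict_functor_strict | exact He | apply Weps_strict | exact Hh |].
  dtrans (iddata A).
  { dtrans (cdata eps (eta Q A)); [apply deq_sym, cdata_strict_l, He | exact E1]. }
  dtrans (cdata (Weps A) (Weta A)). { apply deq_sym, Weps_Weta. }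
  dtrans (mapd (Weps A) (data (Weta A))). { apply cdata_strict_l, Weps_strict. }
  apply mapd_deq, deq_sym, mapd_h_P; auto.
Qed.

Context (hQ : Pseudo (Qo Q (Qo Q A)) (Wcat (Qo Q A))) (HhQ : strict hQ)
  (EhQ : deq (cdata hQ (eta Q (Qo Q A))) (data (Weta (Qo Q A)))).

(* The comparison [Q Q A ~= W (W A)]. *)
Definition Wh_hQ : Pseudo (Qo Q (Qo Q A)) (Wcat (Wcat A)) := comp_pseudo (Wmap h Hh) hQ.

Lemma Wh_hQ_strict : strict Wh_hQ.
Proof. apply comp_pseudo_strict; [apply Wmap_strict | exact HhQ]. Qed.

Lemma Wh_hQ_cancel {B} (d d' : PData B (Qo Q (Qo Q A))) :
  deq (mapd Wh_hQ d) (mapd Wh_hQ d') -> deq d d'.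
Proof.
  apply (mapd_cancel (comp_pseudo (Wext (eta Q (Qo Q A))) (Wmap (Wext (eta Q A)) (Wext_strict _)))).
  apply retraction_comp.
  - apply Wext_h_retraction; auto.
  - apply Wmap_retraction, Wext_h_retraction; auto.
Qed.

Lemma Wh_hQ_eta : deq (mapd Wh_hQ (data (eta Q (Qo Q A)))) (premapd (data (Weta (Wcat A))) h).
Proof.
  dtrans (mapd (Wmap h Hh) (data (Weta (Qo Q A)))).
  { unfold Wh_hQ. rewrite mapd_comp_pseudo. apply mapd_deq, mapd_h_P; auto. }
  dtrans (cdata (Wmap h Hh) (Weta (Qo Q A))). { apply deq_sym, cdata_strict_l, Wmap_strict. }
  apply Wmap_Weta.
Qed.

Lemma comult_factor (s : Pseudo A (Qo Q A)) (Hs : strict s)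
  (Qs : Pseudo (Qo Q A) (Qo Q (Qo Q A))) :
  strict Qs -> deq (cdata Qs (eta Q A)) (cdata (eta Q (Qo Q A)) s) ->
  deq (mapd Wh_hQ (data Qs))
      (mapd (Wmap (comp_pseudo h s) (comp_pseudo_strict _ _ Hh Hs)) (data h)).
Proof.
  intros HQs E2. apply (factor_through_eta Q);
    [apply Wh_hQ_strict | exact HQs | apply Wmap_strict | exact Hh |].
  dtrans (mapd Wh_hQ (premapd (data (eta Q (Qo Q A))) s)).
  { apply mapd_deq. dtrans (cdata Qs (eta Q A)). { apply deq_sym, cdata_strict_l, HQs. }
    dtrans (cdata (eta Q (Qo Q A)) s); [exact E2 | apply cdata_strict_r, Hs]. }
  dtrans (premapd (premapd (data (Weta (Wcat A))) h) s).
  { rewrite mapd_premapd. apply premapd_deq, Wh_hQ_eta. }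
  rewrite premapd_premapd.
  dtrans (cdata (Wmap (comp_pseudo h s) (comp_pseudo_strict _ _ Hh Hs)) (Weta A)).
  { apply deq_sym, Wmap_Weta. }
  dtrans (mapd (Wmap (comp_pseudo h s) (comp_pseudo_strict _ _ Hh Hs)) (data (Weta A))).
  { apply cdata_strict_l, Wmap_strict. }
  apply mapd_deq, deq_sym, mapd_h_P; auto.
Qed.

Lemma delta_factor (delta : Pseudo (Qo Q A) (Qo Q (Qo Q A))) :
  strict delta -> deq (cdata delta (eta Q A)) (cdata (eta Q (Qo Q A)) (eta Q A)) ->
  deq (mapd Wh_hQ (data delta)) (mapd (Wdelta A) (data h)).
Proof.
  intros Hd E3. apply (factor_through_eta Q);
    [apply Wh_hQ_strict | exact Hd | apply Wdelta_strict | exact Hh |].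
  dtrans (mapd Wh_hQ (cdata (eta Q (Qo Q A)) (eta Q A))).
  { apply mapd_deq. dtrans (cdata delta (eta Q A)); [apply deq_sym, cdata_strict_l, Hd | exact E3]. }
  dtrans (dcomp (mapd Wh_hQ (data (eta Q (Qo Q A)))) (data (eta Q A))). { apply mapd_cdata. }
  dtrans (dcomp (premapd (data (Weta (Wcat A))) h) (data (eta Q A))).
  { apply dcomp_deq; [apply Wh_hQ_eta | apply deq_refl]. }
  dtrans (dcomp (data (Weta (Wcat A))) (data (Weta A))).
  { rewrite dcomp_premapd. apply dcomp_deq; [apply deq_refl | apply mapd_h_P; auto]. }
  dtrans (cdata (Wdelta A) (Weta A)). { apply deq_sym, Wdelta_Weta. }
  dtrans (mapd (Wdelta A) (data (Weta A))). { apply cdata_strict_l, Wdelta_strict. }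
  apply mapd_deq, deq_sym, mapd_h_P; auto.
Qed.

End ClassifierComparison.

(** * Coalgebras and free monoids of objects *)

Lemma word_ob_tens_word (A : SMC) (X : Type) (i : X -> Ob A) w :
  word_ob A i w = tens_word A (map i w).
Proof. induction w as [|x w IH]; simpl; congruence. Qed.

Lemma map_injective {X Y} (f : X -> Y) : (forall x y, f x = f y -> x = y) ->
  forall w w', map f w = map f w' -> w = w'.
Proof.
  intros Hf; induction w as [|a w IH]; destruct w' as [|b w']; simpl; intros H;
    try discriminate; auto.
  injection H; intros. f_equal; auto.
Qed.

Section WordSplitting.
Context (A : SMC) (t : Pseudo A (Wcat A)) (Ht : strict t)
  (tens_word_t : forall a, tens_word A (F0 t a) = a)
  (t_idem : forall a, map (F0 t) (F0 t a) = map (fun b => [b]) (F0 t a)).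

(* The generators are the objects that [t] sends to one-letter words. *)
Lemma free_of_word_splitting : IsFreeMonoidOb A.
Proof.
  set (P := fun b => F0 t b = [b]).
  assert (Hgen : forall w : list {b | P b},
    map (F0 t) (map (@proj1_sig _ P) w) = map (fun b => [b]) (map (@proj1_sig _ P) w)).
  { intros w. rewrite !map_map. apply map_ext. intros [b pb]. exact pb. }
  exists {b | P b}, (@proj1_sig _ P). split.
  - intros w w' H. rewrite !word_ob_tens_word in H.
    apply (f_equal (F0 t)) in H. rewrite !strict_tens_word, !Hgen, !tens_word_singletons in H by auto.
    apply (map_injective (@proj1_sig _ P)) in H; auto.
    intros [x px] [y py]; simpl; intros ->. f_equal; apply proof_irrelevance.
  - intros a. destruct (proj1 (Forall_image (@proj1_sig _ P) (F0 t a))) as [w Hw].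
    + apply Forall_forall. intros b Hb. exists (exist _ b (ext_in_map (t_idem a) b Hb)). reflexivity.
    + exists w. rewrite word_ob_tens_word.
      transitivity (tens_word A (F0 t a)); [f_equal; symmetry; exact Hw | apply tens_word_t].
Qed.

End WordSplitting.

Lemma Wmap_Wdelta_agree (A : SMC) (t : Pseudo A (Wcat A)) (Ht : strict t) :
  (forall f, wmor (F1 t f) = f) ->
  (forall a, map (F0 t) (F0 t a) = map (fun b => [b]) (F0 t a)) ->
  deq (mapd (Wmap t Ht) (data t)) (mapd (Wdelta A) (data t)).
Proof.
  intros Hmor Hidem. split; [|split; [|split]]; cbn [mapd data d0 d1 dphi0 dphi2].
  - apply Hidem.
  - intros f. apply WMor_eq; simpl.
    + rewrite (F_dom t f : wdom (F1 t f) = F0 t (dom f)). apply Hidem.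
    + rewrite (F_cod t f : wcod (F1 t f) = F0 t (cod f)). apply Hidem.
    + rewrite Hmor. reflexivity.
  - rewrite (proj1 Ht), !F_idm, (strict_unit (Wmap t Ht)), (strict_unit (Wdelta A))
      by (apply Wmap_strict || apply Wdelta_strict).
    reflexivity.
  - intros a b. rewrite (proj2 Ht), !F_idm. simpl. rewrite !map_app, !Hidem. reflexivity.
Qed.

Section FreeWords.
Context (A : SMC) (X : Type) (i : X -> Ob A)
  (word_inj : forall w w', word_ob A i w = word_ob A i w' -> w = w')
  (word_surj : forall a, exists w, word_ob A i w = a).

Definition parse (a : Ob A) : list X :=
  proj1_sig (constructive_indefinite_description _ (word_surj a)).

Lemma word_ob_parse a : word_ob A i (parse a) = a.
Proof. unfold parse. destruct constructive_indefinite_description; auto. Qed.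

Lemma parse_word_ob w : parse (word_ob A i w) = w.
Proof. apply word_inj, word_ob_parse. Qed.

Definition letters (a : Ob A) : list (Ob A) := map i (parse a).

Lemma tens_word_letters a : tens_word A (letters a) = a.
Proof. unfold letters. rewrite <- word_ob_tens_word. apply word_ob_parse. Qed.

Lemma letters_tens0 a b : letters (tens0 a b) = letters a ++ letters b.
Proof.
  unfold letters. rewrite <- map_app. f_equal.
  rewrite <- (parse_word_ob (parse a ++ parse b)). f_equal.
  rewrite !word_ob_tens_word, map_app, tens_word_app, <- !word_ob_tens_word, !word_ob_parse.
  reflexivity.
Qed.

Lemma letters_unit : letters (unitOb A) = [].
Proof. unfold letters. change (unitOb A) with (word_ob A i []). rewrite parse_word_ob; auto. Qed.

Lemma letters_generator x : letters (i x) = [i x].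
Proof.
  unfold letters. replace (i x) with (word_ob A i [x]) at 1 by apply unitr0.
  rewrite parse_word_ob; auto.
Qed.

Lemma letters_idem a : map letters (letters a) = map (fun b => [b]) (letters a).
Proof. unfold letters at 2 3. rewrite !map_map. apply map_ext, letters_generator. Qed.

Definition Wparse1 (f : Mor A) : WMor A.
Proof. refine (mkW (letters (dom f)) (letters (cod f)) f _ _); rewrite tens_word_letters; auto. Defined.

Definition Wparse : Pseudo A (Wcat A).
Proof.
  refine (@strict_functor A (Wcat A) letters Wparse1 _ _ _ _ _ _ _).
  - reflexivity.
  - reflexivity.
  - intros a. apply WMor_eq; simpl; rewrite ?dom_idm, ?cod_idm, ?tens_word_letters; auto.
  - intros f g H. apply WMor_eq; wcomp; simpl; rewrite ?dom_comp, ?cod_comp; auto; congruence.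
  - apply letters_unit.
  - apply letters_tens0.
  - intros f g. apply WMor_eq; simpl; rewrite ?dom_tens, ?cod_tens, ?letters_tens0; auto.
Defined.

Lemma Wparse_strict : strict Wparse.
Proof. apply strict_functor_strict. Qed.

Lemma Weps_Wparse : deq (mapd (Weps A) (data Wparse)) (iddata A).
Proof.
  repeat split; simpl.
  - apply tens_word_letters.
  - intros a b. rewrite tens_word_app, !tens_word_letters. reflexivity.
Qed.

End FreeWords.

Theorem pie_free (Q : PseudoClassifier) (A : SMC) : IsPie Q A -> IsFreeMonoidOb A.
Proof.
  intros (s & Hs & eps & Qs & delta & Heps & HQs & Hd & E1 & E2 & E3 & [E4 _] & [E5 _]).
  destruct (univ Q (Weta A)) as (h & Hh & Eh & _).
  destruct (univ Q (Weta (Qo Q A))) as (hQ & HhQ & EhQ & _).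
  destruct (mapd_cdata_strict_r _ _ _ _ s Hs (counit_factor Q A h Hh Eh eps Heps E1))
    as [Ceps _].
  destruct (mapd_cdata_strict_r _ _ _ _ s Hs
    (comult_factor Q A h Hh Eh hQ HhQ EhQ s Hs Qs HQs E2)) as [CQs _].
  destruct (mapd_cdata_strict_r _ _ _ _ s Hs
    (delta_factor Q A h Hh Eh hQ HhQ EhQ delta Hd E3)) as [Cdelta _].
  apply (free_of_word_splitting A (comp_pseudo h s) (comp_pseudo_strict _ _ Hh Hs));
    intros a; simpl in *.
  - rewrite <- Ceps. apply E4.
  - rewrite <- CQs, <- Cdelta, E5. reflexivity.
Qed.

Theorem free_pie (Q : PseudoClassifier) (A : SMC) : IsFreeMonoidOb A -> IsPie Q A.
Proof.
  intros (X & i & Hinj & Hsurj).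
  set (j := Wparse A X i Hinj Hsurj).
  set (s := comp_pseudo (Wext (eta Q A)) j).
  assert (Hs : strict s) by (apply comp_pseudo_strict; [apply Wext_strict | apply (Wparse_strict A X i Hinj Hsurj)]).
  destruct (univ Q (Weta A)) as (h & Hh & Eh & _).
  destruct (univ Q (Weta (Qo Q A))) as (hQ & HhQ & EhQ & _).
  destruct (univ Q (id_pseudo A)) as (eps & Heps & E1 & _).
  destruct (univ Q (comp_pseudo (eta Q (Qo Q A)) s)) as (Qs & HQs & E2 & _).
  destruct (univ Q (comp_pseudo (eta Q (Qo Q A)) (eta Q A))) as (delta & Hd & E3 & _).
  assert (Hhs : deq (cdata h s) (data j)).
  { dtrans (mapd h (data s)). { apply cdata_strict_l, Hh. }
    dtrans (mapd h (mapd (Wext (eta Q A)) (data j))).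
    { apply mapd_deq. unfold s. rewrite data_comp_pseudo. apply cdata_strict_l, Wext_strict. }
    apply mapd_retraction, h_Wext_retraction; assumption. }
  exists s. split; [exact Hs|]. exists eps, Qs, delta.
  refine (conj Heps (conj HQs (conj Hd (conj E1 (conj E2 (conj E3 (conj _ _))))))).
  - dtrans (mapd (id_pseudo A) (cdata eps s)). { apply deq_sym, mapd_id_pseudo. }
    dtrans (mapd (Weps A) (cdata h s)).
    { exact (mapd_cdata_strict_r _ _ _ _ s Hs (counit_factor Q A h Hh Eh eps Heps E1)). }
    dtrans (mapd (Weps A) (data j)). { apply mapd_deq, Hhs. }
    apply (Weps_Wparse A X i Hinj Hsurj).
  - apply (Wh_hQ_cancel Q A h Hh Eh hQ HhQ EhQ).
    dtrans (mapd (Wmap (comp_pseudo h s) (comp_pseudo_strict _ _ Hh Hs)) (cdata h s)).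
    { exact (mapd_cdata_strict_r _ _ _ _ s Hs
               (comult_factor Q A h Hh Eh hQ HhQ EhQ s Hs Qs HQs E2)). }
    dtrans (mapd (Wdelta A) (cdata h s)).
    2: { apply deq_sym, (mapd_cdata_strict_r _ _ _ _ s Hs),
           (delta_factor Q A h Hh Eh hQ HhQ EhQ delta Hd E3). }
    rewrite <- data_comp_pseudo. destruct Hhs as (H0 & H1 & _).
    apply Wmap_Wdelta_agree; intros; simpl in H0, H1 |- *.
    + rewrite H1. reflexivity.
    + rewrite (map_ext _ _ H0), H0. apply (letters_idem A X i Hinj Hsurj).
Qed.

Theorem mainTheorem5 (Q : PseudoClassifier) (A : SMC) :
  IsPie Q A <-> IsFreeMonoidOb A.
Proof. split; [apply pie_free | apply free_pie]. Qed.
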